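(* Let $k$ be a field and $n\in\mathbb{Z}$. Let $(x,y)\in k^2$. Then $f_n(x,y)=0$ and $x^2-y-2=0$ hold simultaneously if and only if $n\neq0$ in $k$, $y=2-\frac1n$ and $x^2=4-\frac1n$; that is, the common zeros are the points $(\pm\sqrt{4-\frac1n},\,2-\frac1n)$ (when such square roots exist in $k$), and there are none if $n=0$ in $k$.
   Context: $\mathcal{S}_n(z)\in\mathbb{Z}[z]$ ($n\in\mathbb{Z}$) are the Chebyshev polynomials of the second kind defined by $\mathcal{S}_0=0$, $\mathcal{S}_1=1$, $\mathcal{S}_{n+1}=z\mathcal{S}_n-\mathcal{S}_{n-1}$ for all $n\in\mathbb{Z}$ (so that $\mathcal{S}_n(2\cos\theta)=\sin n\theta/\sin\theta$). Put $z=z(x,y)=2x^2-x^2y+y^2-2$ and $f_n(x,y)=(y-1)\mathcal{S}_n(z)-\mathcal{S}_{n-1}(z)$. *)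

From mathcomp Require Import all_boot all_order all_algebra.
Set Implicit Arguments. Unset Strict Implicit. Unset Printing Implicit Defensive.
Import Order.TTheory GRing.Theory Num.Theory.
Local Open Scope ring_scope.

(* Chebyshev polynomials of the second kind S_n, evaluated at z in a ring R:
   S_0 = 0, S_1 = 1, S_{n+1} = z S_n - S_{n-1}.
   chebS_pair n z = (S_n(z), S_{n+1}(z)) for n : nat. *)
Fixpoint chebS_pair (R : nzRingType) (n : nat) (z : R) : R * R :=
  match n with
  | 0%N => (0, 1)
  | n'.+1 => let: (a, b) := chebS_pair n' z in (b, z * b - a)
  end.

(* Extension to all integers: the recurrence forces S_{-n} = - S_n. *)
Definition chebS (R : nzRingType) (n : int) (z : R) : R :=
  match n with
  | Posz m => (chebS_pair m z).1
  | Negz m => - (chebS_pair m.+1 z).1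
  end.

Definition zxy (R : nzRingType) (x y : R) : R := 2 * x ^+ 2 - x ^+ 2 * y + y ^+ 2 - 2.

Definition f_n (R : nzRingType) (n : int) (x y : R) : R :=
  (y - 1) * chebS n (zxy x y) - chebS (n - 1) (zxy x y).

From mathcomp Require Import all_boot all_order all_algebra.
From mathcomp Require Import ring zify.
Import Order.TTheory GRing.Theory Num.Theory.
Local Open Scope ring_scope.

(* On the parabola x^2 = y + 2 the argument z(x, y) collapses to 2, where
   S_n(2) = n; so f_n restricted to the parabola is the linear polynomial
   n (y - 2) + 1, whose root y = 2 - 1/n exists iff n <> 0 in k. *)

Lemma chebS_pair_two (R : nzRingType) (m : nat) :
  chebS_pair m (2 : R) = (m%:R, m.+1%:R).
Proof.
elim: m => [|m IH] /=; first by rewrite mulr1n.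
rewrite IH; congr pair.
by rewrite -natrM -natrB; [congr (_%:R) | ]; lia.
Qed.

Lemma chebS_two (R : nzRingType) (n : int) : chebS n (2 : R) = n%:~R.
Proof. by case: n => m /=; rewrite chebS_pair_two. Qed.

Lemma zxy_parabola (R : comNzRingType) (x y : R) :
  x ^+ 2 = y + 2 -> zxy x y = 2.
Proof. by move=> x2E; rewrite /zxy x2E; ring. Qed.

Lemma f_n_parabola (R : comNzRingType) (n : int) (x y : R) :
  x ^+ 2 = y + 2 -> f_n n x y = n%:~R * (y - 2) + 1.
Proof.
by move=> x2E; rewrite /f_n zxy_parabola // !chebS_two intrD /=; ring.
Qed.

Lemma mulr_addr1_eq0 (k : fieldType) (a b : k) :
  (a * b + 1 == 0) = (a != 0) && (b == - a^-1).
Proof.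
have [->|a_neq0] := eqVneq a 0; first by rewrite mul0r add0r oner_eq0.
by rewrite addr_eq0 -[RHS](inj_eq (mulfI a_neq0)) mulrN divff.
Qed.

Theorem proposition9p1 (k : fieldType) (n : int) (x y : k) :
  (f_n n x y = 0 /\ x ^+ 2 - y - 2 = 0) <->
  [/\ (n%:~R : k) != 0, y = 2 - (n%:~R)^-1 & x ^+ 2 = 4 - (n%:~R)^-1].
Proof.
have parabolaE : (x ^+ 2 - y - 2 = 0) <-> (x ^+ 2 = y + 2).
  by rewrite -addrA -opprD; split=> [/subr0_eq | ->]; last exact: subrr.
have linearE : (n%:~R * (y - 2) + 1 = 0) <->
               ((n%:~R : k) != 0 /\ y = 2 - (n%:~R)^-1).
  split.
  - move/eqP; rewrite mulr_addr1_eq0 => /andP[n_neq0 /eqP yE].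
    by split=> //; rewrite -yE addrC subrK.
  - move=> [n_neq0 ->]; apply/eqP.
    by rewrite mulr_addr1_eq0 n_neq0 addrC addKr; apply/eqP.
split.
- move=> [fE /parabolaE x2E].
  move: fE; rewrite f_n_parabola // => /linearE [n_neq0 yE].
  by split=> //; rewrite x2E yE; ring.
- move=> [n_neq0 yE x2E].
  have on_parabola : x ^+ 2 = y + 2 by rewrite x2E yE; ring.
  by split; [rewrite f_n_parabola //; apply/linearE | apply/parabolaE].
Qed.
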